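(* Let $a\ge2$ be an integer. Then $$D_{2^a+1}\equiv 3+2^{a+2}\pmod{4^{a+1}}\qquad\text{and}\qquad D_{2^a-1}\equiv -1\pmod{4^{a+1}}.$$
   Context: $D_n=\sum_{k=0}^{n}\binom{n}{k}\binom{n+k}{k}$ are the central Delannoy numbers. *)

From mathcomp Require Import all_boot all_order all_algebra.
Set Implicit Arguments. Unset Strict Implicit. Unset Printing Implicit Defensive.

Definition delannoy (n : nat) : nat :=
  \sum_(0 <= k < n.+1) 'C(n, k) * 'C(n + k, k).

From mathcomp Require Import all_boot all_order all_algebra.
From mathcomp Require Import ring zify.
Set Implicit Arguments. Unset Strict Implicit. Unset Printing Implicit Defensive.
Import GRing.Theory Num.Theory.

(* Write D_n = sum_k 2^k C(n,k)^2 and N = 2^a.  From k C(N,k) = N C(N-1,k-1)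
   one gets 2^(a - log2 k) | C(N,k) for 0 < k, so for k >= 6 every term
   2^k c^2 with c a combination of such binomials is divisible by
   2^(k + 2(a - log2 k)), hence by 4^(a+1).  For D_(N+1) this disposes of all
   terms but the first six (C(N+1,k) = C(N,k) + C(N,k-1)); these form a
   polynomial in N = 4t whose deviation from 3 + 4N, after clearing the odd
   denominators, is N^2 times a positive combination of odd squares that is
   0 mod 4.
   For D_(N-1) the binomials are all odd, so write (-1)^k C(N-1,k) = 1 + P_k,
   where P_k is an alternating partial sum of the row C(N,_) and so again
   divisible by 2^(a - log2 k).  Expanding the square, the linear terms sum to
   2(-1)^(N-1) - (2^N - 1) by the binomial theorem, and sum_k 2^k P_k^2 is
   0 mod 4^(a+1) by the same head/tail argument. *)

Lemma sum_bin_mul_bin n j :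
  \sum_(k < n.+1) 'C(n, k) * 'C(k, j) = 'C(n, j) * 2 ^ (n - j).
Proof.
elim: n j => [|n IHn] j.
  by rewrite big_ord_recl big_ord0 addn0 bin0 mul1n sub0n muln1 bin0n.
case: j => [|j].
  rewrite subn0 -[2]/(1 + 1) expnDn bin0 mul1n.
  by apply: eq_bigr => k _; rewrite bin0 !exp1n !muln1.
rewrite big_ord_recl bin0n muln0 add0n.
have -> : \sum_(i < n.+1) 'C(n.+1, bump 0 i) * 'C(bump 0 i, j.+1) =
    \sum_(i < n.+1) 'C(n, i.+1) * 'C(i.+1, j.+1) +
    \sum_(i < n.+1) 'C(n, i) * 'C(i.+1, j.+1).
  by rewrite -big_split; apply: eq_bigr => i _; rewrite binS mulnDl.
have shifted : \sum_(i < n.+1) 'C(n, i.+1) * 'C(i.+1, j.+1) =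
    'C(n, j.+1) * 2 ^ (n - j.+1).
  rewrite -IHn big_ord_recr /= bin_small // mul0n addn0.
  by rewrite [RHS]big_ord_recl /= muln0 add0n.
rewrite shifted; under eq_bigr do rewrite binS mulnDr.
rewrite big_split /= !IHn binS mulnDl subSS addnA; congr (_ + _).
have [lt_nj | le_jn] := ltnP n j.+1; first by rewrite bin_small // !mul0n.
by rewrite -mulnDr addnn -mul2n -expnS subnSK.
Qed.

Lemma bin_addn_sum n k :
  'C(n + k, k) = \sum_(j < n.+1) 'C(n, j) * 'C(k, j).
Proof.
rewrite -{2}[k](addKn n) bin_sub ?leq_addr // [n + k]addnC -binomial.Vandermonde.
by apply: eq_bigr => j _; rewrite mulnC bin_sub // -ltnS.
Qed.

Lemma delannoy_sqr n : delannoy n = \sum_(k < n.+1) 'C(n, k) ^ 2 * 2 ^ k.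
Proof.
rewrite /delannoy big_mkord.
transitivity (\sum_(j < n.+1) 'C(n, j) ^ 2 * 2 ^ (n - j)).
  under eq_bigr do rewrite bin_addn_sum big_distrr.
  rewrite exchange_big; apply: eq_bigr => j _ /=.
  under eq_bigr do rewrite mulnCA.
  by rewrite -big_distrr /= sum_bin_mul_bin mulnA.
rewrite (reindex_inj rev_ord_inj) /=; apply: eq_bigr => j _.
by rewrite subSS bin_sub ?subKn // -ltnS.
Qed.

Lemma dvdn_bin_pfactor p a i j : prime p -> 0 < i <= j ->
  p ^ (a - trunc_log p j) %| 'C(p ^ a, i).
Proof.
move=> p_pr /andP[i_gt0 le_ij].
have [lt_pa_i | le_i_pa] := ltnP (p ^ a) i; first by rewrite bin_small.
have C_gt0 : 0 < 'C(p ^ a, i) by rewrite bin_gt0.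
have : p ^ a %| i * 'C(p ^ a, i).
  by rewrite -(prednK i_gt0) -mul_bin_diag dvdn_mulr.
rewrite pfactor_dvdn ?muln_gt0 ?i_gt0 // lognM // => le_a_log.
have le_log_i : logn p i <= trunc_log p j.
  apply: trunc_log_max; first exact: prime_gt1.
  exact: leq_trans (dvdn_leq i_gt0 (pfactor_dvdnn p i)) le_ij.
rewrite pfactor_dvdn //; lia.
Qed.

Lemma exp2_pred2 a : 2 <= a -> 2 ^ a = 4 * 2 ^ (a - 2).
Proof. by move=> a_ge2; rewrite -{1}(subnKC a_ge2) expnD. Qed.

Lemma exp2_ge_double_add2 t : 3 <= t -> 2 * t + 2 <= 2 ^ t.
Proof.
elim: t => // t IHt; rewrite leq_eqVlt => /predU1P[<- // | /IHt].
by rewrite expnS; lia.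
Qed.

Lemma trunc_log2_tail_bound a k : 6 <= k ->
  2 * a + 2 <= k + 2 * (a - trunc_log 2 k).
Proof.
move=> k_ge6; have := trunc_logP (isT : 1 < 2) (leq_trans (isT : 0 < 6) k_ge6).
have [t_ge3 | t_lt3] := leqP 3 (trunc_log 2 k).
  by move/(leq_trans (exp2_ge_double_add2 t_ge3)); lia.
lia.
Qed.

Local Open Scope ring_scope.

Lemma delannoy_sqrz n :
  (delannoy n)%:Z = \sum_(k < n.+1) 2 ^+ k * 'C(n, k)%:Z ^+ 2.
Proof.
rewrite delannoy_sqr -[LHS]natz natr_sum; apply: eq_bigr => k _.
by rewrite natrM !natrX natz mulrC.
Qed.

Lemma exp4z a : (4 : int) ^+ a = 2 ^+ (2 * a).
Proof. by rewrite exprM. Qed.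

Lemma natz_exp2 e : (2 ^ e)%N%:Z = 2 ^+ e.
Proof. by rewrite -natz natrX. Qed.

Lemma dvdz_bin_pow2 a i j : (0 < i <= j)%N ->
  (2 ^+ (a - trunc_log 2 j) %| 'C(2 ^ a, i)%:Z)%Z.
Proof. by move=> ij; rewrite -natz_exp2 dvdzE; exact: dvdn_bin_pfactor. Qed.

Lemma dvdz_tail_term a k (c : int) : (6 <= k)%N ->
  (2 ^+ (a - trunc_log 2 k) %| c)%Z -> (4 ^+ (a + 1) %| 2 ^+ k * c ^+ 2)%Z.
Proof.
move=> k_ge6 dvd_c; rewrite exp4z.
apply: dvdz_trans (dvdz_mul (dvdzz (2 ^+ k)) (dvdz_exp2r 2 dvd_c)).
rewrite -exprM -exprD dvdz_exp2l //.
by have := trunc_log2_tail_bound a k_ge6; lia.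
Qed.

Lemma signed_bin_sub1 n j :
  (-1) ^+ j * 'C(n, j)%:Z - 1 = \sum_(i < j) (-1) ^+ i.+1 * 'C(n.+1, i.+1)%:Z.
Proof.
elim: j => [|j IHj]; first by rewrite big_ord0 bin0 mulr1 subrr.
by rewrite big_ord_recr /= -IHj binS PoszD exprS; ring.
Qed.

Lemma sum_signed_bin_exp2 n :
  \sum_(k < n.+1) 2 ^+ k * ((-1) ^+ k * 'C(n, k)%:Z) = (-1) ^+ n.
Proof.
rewrite [RHS](_ : _ = (1 - 2) ^+ n) // exprDn; apply: eq_bigr => k _.
by rewrite expr1n mul1r [in RHS]exprNn pmulrn -mulrzr intz; ring.
Qed.

Lemma sum_exp2_bin_sqr n :
  \sum_(k < n.+1) 2 ^+ k * 'C(n, k)%:Z ^+ 2 =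
  \sum_(k < n.+1) 2 ^+ k * ((-1) ^+ k * 'C(n, k)%:Z - 1) ^+ 2
  + 2 * (-1) ^+ n - (2 ^+ n.+1 - 1).
Proof.
have geo : \sum_(k < n.+1) (2 : int) ^+ k = 2 ^+ n.+1 - 1.
  by rewrite subrX1 (_ : 2 - 1 = 1) ?mul1r.
rewrite -sum_signed_bin_exp2 -geo mulr_sumr -big_split -sumrB.
apply: eq_bigr => k _ /=.
have -> : 'C(n, k)%:Z ^+ 2 = ((-1) ^+ k * 'C(n, k)%:Z) ^+ 2.
  by rewrite exprMn sqrr_sign mul1r.
ring.
Qed.

Lemma natr_ffact (R : comPzRingType) n k :
  (n ^_ k)%:R = \prod_(i < k) (n%:R - i%:R) :> R.
Proof.
have [le_kn | lt_nk] := leqP k n.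
  rewrite ffact_prod natr_prod; apply: eq_bigr => i _.
  by rewrite natrB // (leq_trans _ le_kn) 1?ltnW.
by rewrite ffact_small // [RHS](bigD1 (Ordinal lt_nk)) //= subrr mul0r.
Qed.

Lemma natr_bin (F : numFieldType) n k :
  'C(n, k)%:R = (\prod_(i < k) (n%:R - i%:R)) / k`!%:R :> F.
Proof. by rewrite -natr_ffact -bin_ffact natrM mulfK // pnatr_eq0 -lt0n fact_gt0. Qed.

(* For odd u_i this is 450 + 225 + 50 + 25 + 2 = 752 = 0 mod 4. *)
Definition delannoy_cofactor {R : pzRingType} (u1 u2 u3 u4 : R) : R :=
  450 + 225 * u1 ^+ 2 + 50 * u2 ^+ 2 + 25 * u3 ^+ 2 + 2 * u4 ^+ 2.

Definition succ_cofactor {R : pzRingType} (t : R) : R :=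
  delannoy_cofactor (4 * t + 1) (16 * t ^+ 2 - 1) ((16 * t ^+ 2 - 1) * (2 * t - 1))
    ((16 * t ^+ 2 - 1) * (2 * t - 1) * (4 * t - 3)).

Definition pred_cofactor {R : pzRingType} (t : R) : R :=
  delannoy_cofactor (4 * t - 3) (16 * t ^+ 2 - 24 * t + 11)
    (32 * t ^+ 3 - 80 * t ^+ 2 + 70 * t - 25)
    (128 * t ^+ 4 - 480 * t ^+ 3 + 680 * t ^+ 2 - 450 * t + 137).

Lemma head_succ_field (F : numFieldType) (t : nat) :
  225 * (\sum_(k < 6) 2 ^+ k * 'C((4 * t).+1, k)%:R ^+ 2 - 3 - 16 * t%:R)
  = 16 * t%:R ^+ 2 * succ_cofactor t%:R :> F.
Proof.
rewrite !big_ord_recr big_ord0 /= !natr_bin !big_ord_recr big_ord0 /=.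
by rewrite -!natr1 natrM /succ_cofactor /delannoy_cofactor; field.
Qed.

Lemma head_pred_field (F : numFieldType) (t : nat) : (0 < t)%N ->
  225 * \sum_(k < 6) 2 ^+ k * ((-1) ^+ k * 'C((4 * t).-1, k)%:R - 1) ^+ 2
  = 16 * t%:R ^+ 2 * pred_cofactor t%:R :> F.
Proof.
move=> t_gt0; rewrite !big_ord_recr big_ord0 /= !natr_bin !big_ord_recr big_ord0 /=.
rewrite -subn1 natrB ?muln_gt0 // natrM /pred_cofactor /delannoy_cofactor.
by rewrite !factS fact0; field.
Qed.

Lemma head_succ (t : nat) :
  225 * (\sum_(k < 6) 2 ^+ k * 'C((4 * t).+1, k)%:Z ^+ 2 - 3 - 16 * t%:Z)
  = 16 * t%:Z ^+ 2 * succ_cofactor t%:Z.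
Proof.
apply: (@intr_inj rat); have := head_succ_field rat t.
rewrite /succ_cofactor /delannoy_cofactor !big_ord_recr !big_ord0 /= => E.
by apply: etrans (etrans _ E) _; ring.
Qed.

Lemma head_pred (t : nat) : (0 < t)%N ->
  225 * \sum_(k < 6) 2 ^+ k * ((-1) ^+ k * 'C((4 * t).-1, k)%:Z - 1) ^+ 2
  = 16 * t%:Z ^+ 2 * pred_cofactor t%:Z.
Proof.
move=> t_gt0; apply: (@intr_inj rat); have := head_pred_field rat t_gt0.
rewrite /pred_cofactor /delannoy_cofactor !big_ord_recr !big_ord0 /= => E.
by apply: etrans (etrans _ E) _; ring.
Qed.

Lemma delannoy_cofactor_dvd4 (u1 u2 u3 u4 : int) :
  (2 %| u1 - 1)%Z -> (2 %| u2 - 1)%Z -> (2 %| u3 - 1)%Z -> (2 %| u4 - 1)%Z ->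
  (4 %| delannoy_cofactor u1 u2 u3 u4)%Z.
Proof.
move=> /dvdzP[w1 e1] /dvdzP[w2 e2] /dvdzP[w3 e3] /dvdzP[w4 e4].
apply/dvdzP; exists (188 + 225 * w1 * (w1 + 1) + 50 * w2 * (w2 + 1)
  + 25 * w3 * (w3 + 1) + 2 * w4 * (w4 + 1)).
rewrite /delannoy_cofactor -(subrK 1 u1) -(subrK 1 u2) -(subrK 1 u3) -(subrK 1 u4).
by rewrite e1 e2 e3 e4; ring.
Qed.

Lemma succ_cofactor_dvd4 (t : int) : (4 %| succ_cofactor t)%Z.
Proof.
apply: delannoy_cofactor_dvd4; apply/dvdzP.
- by exists (2 * t); ring.
- by exists (8 * t ^+ 2 - 1); ring.
- by exists (16 * t ^+ 3 - 8 * t ^+ 2 - t); ring.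
- by exists (64 * t ^+ 4 - 80 * t ^+ 3 + 20 * t ^+ 2 + 5 * t - 2); ring.
Qed.

Lemma pred_cofactor_dvd4 (t : int) : (4 %| pred_cofactor t)%Z.
Proof.
apply: delannoy_cofactor_dvd4; apply/dvdzP.
- by exists (2 * t - 2); ring.
- by exists (8 * t ^+ 2 - 12 * t + 5); ring.
- by exists (16 * t ^+ 3 - 40 * t ^+ 2 + 35 * t - 13); ring.
- by exists (64 * t ^+ 4 - 240 * t ^+ 3 + 340 * t ^+ 2 - 225 * t + 68); ring.
Qed.

Lemma dvdz_head_cofactor a (h c : int) : (2 <= a)%N ->
  225 * h = 16 * (2 ^+ (a - 2)) ^+ 2 * c -> (4 %| c)%Z -> (4 ^+ (a + 1) %| h)%Z.
Proof.
move=> a_ge2 eq_h dvd_c.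
have coprime_225 : coprimez (4 ^+ (a + 1)) 225 by rewrite coprimez_pexpl ?addn1.
rewrite -(Gauss_dvdzr _ coprime_225) eq_h.
have -> : (4 : int) ^+ (a + 1) = 16 * (2 ^+ (a - 2)) ^+ 2 * 4.
  rewrite exp4z -exprM (_ : 16 = 2 ^+ 4) // (_ : 4 = 2 ^+ 2) // -!exprD.
  by congr (_ ^+ _); lia.
by rewrite dvdz_mul2l // mulf_neq0 ?expf_neq0.
Qed.

Lemma head_succ_dvd a : (2 <= a)%N ->
  (4 ^+ (a + 1) %| \sum_(k < 6) 2 ^+ k * 'C((2 ^ a).+1, k)%:Z ^+ 2 - 3 - 2 ^+ (a + 2))%Z.
Proof.
move=> a_ge2; apply: (dvdz_head_cofactor a_ge2 _ (succ_cofactor_dvd4 (2 ^ (a - 2))%:Z)).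
have e : (2 : int) ^+ (a + 2) = 16 * 2 ^+ (a - 2).
  by rewrite (_ : 16 = 2 ^+ 4) // -exprD; congr (_ ^+ _); lia.
by rewrite exp2_pred2 // e -natz_exp2 head_succ.
Qed.

Lemma head_pred_dvd a : (2 <= a)%N ->
  (4 ^+ (a + 1) %| \sum_(k < 6) 2 ^+ k * ((-1) ^+ k * 'C((2 ^ a).-1, k)%:Z - 1) ^+ 2)%Z.
Proof.
move=> a_ge2; apply: (dvdz_head_cofactor a_ge2 _ (pred_cofactor_dvd4 (2 ^ (a - 2))%:Z)).
by rewrite exp2_pred2 // -natz_exp2 head_pred // expn_gt0.
Qed.

Lemma delannoy_pow2_succ a : (2 <= a)%N ->
  ((delannoy (2 ^ a).+1)%:Z = 3 + 2 ^+ (a + 2) %[mod 4 ^+ (a + 1)])%Z.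
Proof.
move=> a_ge2; have N_ge4 : (4 <= 2 ^ a)%N by rewrite exp2_pred2 // leq_pmulr ?expn_gt0.
apply/eqP; rewrite eqz_mod_dvd delannoy_sqrz.
have six_le : (6 <= (2 ^ a).+2)%N by rewrite ltnS.
rewrite -(subnKC six_le) big_split_ord /=.
set head := \sum_(k < 6) _; set tail := \sum_(k < _) _.
have -> : head + tail - (3 + 2 ^+ (a + 2)) = (head - 3 - 2 ^+ (a + 2)) + tail by ring.
apply: rpredD; first exact: head_succ_dvd.
apply: rpred_sum => k _; apply: (dvdz_tail_term (leq_addr k 6)).
rewrite addSn binS PoszD.
by apply: rpredD; apply: dvdz_bin_pow2; rewrite ?leqnn ?leqnSn.
Qed.

Lemma delannoy_pow2_pred a : (3 <= a)%N ->
  ((delannoy (2 ^ a).-1)%:Z = -1 %[mod 4 ^+ (a + 1)])%Z.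
Proof.
move=> a_ge3; have a_ge2 := ltnW a_ge3.
have N_ge2a2 : (2 * a + 2 <= 2 ^ a)%N := exp2_ge_double_add2 a_ge3.
have N_gt0 : (0 < 2 ^ a)%N by rewrite expn_gt0.
have sign_pred : (-1) ^+ (2 ^ a).-1 = - 1 :> int.
  by rewrite -signr_odd -[odd _]negbK -oddS prednK // oddX orbF -lt0n ltnW.
rewrite delannoy_sqrz sum_exp2_bin_sqr sign_pred prednK //.
apply/eqP; rewrite eqz_mod_dvd.
set Q := \sum_(k < _) _.
rewrite [X in (_ %| X)%Z](_ : _ = Q - 2 ^+ (2 ^ a)%N); last by ring.
apply: rpredB; last by rewrite exp4z; apply: dvdz_exp2l; lia.
have six_le : (6 <= 2 ^ a)%N by apply: leq_trans N_ge2a2; lia.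
set m := (2 ^ a).-1 in Q *; rewrite /Q -(subnKC six_le) big_split_ord /=.
apply: rpredD; first exact: head_pred_dvd.
apply: rpred_sum => k _; apply: (dvdz_tail_term (leq_addr k 6)).
rewrite signed_bin_sub1 prednK //; apply: rpred_sum => i _; apply: dvdz_mull.
by apply: dvdz_bin_pow2; rewrite ltn_ord.
Qed.

Theorem theorem3p1 (a : nat) (ha : (2 <= a)%N) :
  ((delannoy (2 ^ a).+1)%:Z = 3 + 2 ^+ (a + 2) %[mod 4 ^+ (a + 1)])%Z /\
  ((delannoy (2 ^ a).-1)%:Z = -1 %[mod 4 ^+ (a + 1)])%Z.
Proof.
split; first exact: delannoy_pow2_succ.
have [a_ge3 | a_lt3] := leqP 3 a; first exact: delannoy_pow2_pred.
have -> : a = 2%N by lia.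
by rewrite /delannoy unlock.
Qed.
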